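(* Let $\mathbf{a}_1,\mathbf{a}_2\in G(t)$ with $\mathbf{a}_1\mathbf{a}_2\neq\mathbf{a}_2\mathbf{a}_1$. Then for any $t_{13},t_{23}\in\mathbb{C}$ with $t_{13}\notin\{t_{23},\,t^2-t_{23}\}$, there exists $\mathbf{a}_3\in G(t)$ such that $\mathrm{tr}(\mathbf{a}_1\mathbf{a}_3)=t_{13}$ and $\mathrm{tr}(\mathbf{a}_2\mathbf{a}_3)=t_{23}$.
   Context: $G=\mathrm{SL}(2,\mathbb{C})$ and, for $t\in\mathbb{C}$, $G(t)=\{\mathbf{x}\in G:\mathrm{tr}(\mathbf{x})=t\}$. *)

From mathcomp Require Import all_boot all_order all_algebra.
From mathcomp Require Import complex.
From mathcomp Require Import Rstruct.
Set Implicit Arguments. Unset Strict Implicit. Unset Printing Implicit Defensive.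
Import GRing.Theory Num.Theory.
Local Open Scope ring_scope.

Notation CC := (complex Rdefinitions.R).

Definition in_SL2 (x : 'M[CC]_2) : Prop := \det x = 1.
Definition in_Gt (t : CC) (x : 'M[CC]_2) : Prop := in_SL2 x /\ \tr x = t.

From mathcomp Require Import all_boot all_order all_algebra.
From mathcomp Require Import complex Rstruct.
From mathcomp Require Import ring.
Set Implicit Arguments.
Unset Strict Implicit.
Unset Printing Implicit Defensive.
Import GRing.Theory Num.Theory.
Local Open Scope ring_scope.

(* Write x in G(t) as t/2 + u with u traceless; then det x = 1 becomes
   tr (u u) = t^2/2 - 2, and tr (x y) = t^2/2 + tr (u w) for y = t/2 + w.  So one
   needs a traceless w with tr (u1 w) = t13 - t^2/2 =: p, tr (u2 w) = t23 - t^2/2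
   =: q and tr (w w) = t^2/2 - 2.  The commutator n = [u1, u2] is orthogonal to
   u1 and u2 for the trace form, so if w0 has the right values against u1, u2,
   so does w0 + s n, while tr ((w0 + s n)^2) is a quadratic polynomial in s.  It
   has a root unless tr (n n) = tr (w0 n) = 0, and this degenerate case is
   excluded, using p <> q and p <> -q, by the identity expressing tr (w n)^2
   through the Gram determinant of u1, u2, w. *)

Section TraceForm.
Variables (R : comNzRingType) (n : nat).
Implicit Types A B C : 'M[R]_n.

Definition mxcomm A B := A *m B - B *m A.

Lemma mxtrace_mxcomm A B : \tr (mxcomm A B) = 0.
Proof. by rewrite raddfB /= mxtrace_mulC subrr. Qed.

Lemma mxtrace_mul_mxcomm A B C : \tr (A *m mxcomm B C) = \tr (C *m mxcomm A B).
Proof.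
rewrite !mulmxBr !raddfB /= !mulmxA.
by rewrite (mxtrace_mulC (A *m B)) (mxtrace_mulC (C *m B)) !mulmxA.
Qed.

Lemma mxcommxx A : mxcomm A A = 0.
Proof. exact: subrr. Qed.

Lemma mxtrace_mul_mxcomml A B : \tr (A *m mxcomm A B) = 0.
Proof. by rewrite mxtrace_mul_mxcomm mxcommxx mulmx0 mxtrace0. Qed.

Lemma mxtrace_mul_mxcommr A B : \tr (B *m mxcomm A B) = 0.
Proof. by rewrite -mxtrace_mul_mxcomm mxcommxx mulmx0 mxtrace0. Qed.

Lemma mxcommC A B : mxcomm B A = - mxcomm A B.
Proof. by rewrite opprB. Qed.

Lemma mxcommBr A B C : mxcomm A (B - C) = mxcomm A B - mxcomm A C.
Proof. by rewrite /mxcomm mulmxBr mulmxBl !opprD !opprK [LHS]addrACA. Qed.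

Lemma mxcommZr a A B : mxcomm A (a *: B) = a *: mxcomm A B.
Proof. by rewrite /mxcomm scalerBr scalemxAr scalemxAl. Qed.

Lemma mxcomm_scalar_add (a b : R) A B : mxcomm (a%:M + A) (b%:M + B) = mxcomm A B.
Proof.
rewrite /mxcomm !mulmxDl !mulmxDr -!scalar_mxM mulrC !scalar_mxC.
by rewrite -[X in _ - X]addrACA opprD addrACA subrr add0r opprD addrACA subrr add0r.
Qed.

Lemma mxtrace_sqr_addZ (a : R) A B : \tr ((A + a *: B) *m (A + a *: B))
  = \tr (A *m A) + 2 * a * \tr (A *m B) + a ^+ 2 * \tr (B *m B).
Proof.
rewrite mulmxDl !mulmxDr !raddfD /= -!scalemxAr -!scalemxAl !mxtraceZ.
by rewrite (mxtrace_mulC B A); ring.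
Qed.

Lemma mxtrace_mul_delta i j A : \tr (delta_mx i j *m A) = A j i.
Proof.
rewrite /mxtrace (bigD1 i) //= big1 ?addr0 => [|k nki]; last first.
  by rewrite mxE big1 // => l _; rewrite mxE (negPf nki) mul0r.
rewrite mxE (bigD1 j) //= big1 ?addr0 => [|l nlj]; first by rewrite mxE !eqxx mul1r.
by rewrite mxE (negPf nlj) andbF mul0r.
Qed.

End TraceForm.

Section TwoByTwo.
Variable R : comNzRingType.
Implicit Types (A B u v w : 'M[R]_2) (c : R).

Lemma det_mx22 A : \det A = A 0 0 * A 1 1 - A 0 1 * A 1 0.
Proof.
rewrite (expand_det_row A 0) !big_ord_recl big_ord0 /cofactor !det_mx11 !mxE /=.
have -> : A (lift 0 0) (lift ord0 0) = A 1 1 by congr (A _ _); apply: val_inj.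
have -> : A (lift 0 0) (lift (lift ord0 ord0) 0) = A 1 0.
  by congr (A _ _); apply: val_inj.
have -> : A 0 (lift ord0 ord0) = A 0 1 by congr (A _ _); apply: val_inj.
by rewrite /bump /=; ring.
Qed.

Lemma mxtrace_mx22 A : \tr A = A 0 0 + A 1 1.
Proof.
rewrite /mxtrace !big_ord_recl big_ord0 addr0.
by congr (_ + _); congr (A _ _); apply: val_inj.
Qed.

Lemma mulmx_mx22E A B i j : (A *m B) i j = A i 0 * B 0 j + A i 1 * B 1 j.
Proof.
rewrite mxE !big_ord_recl big_ord0 addr0.
by congr (_ * _ + _ * _); congr (_ _ _); apply: val_inj.
Qed.

Lemma sl2_entry11 u : \tr u = 0 -> u 1 1 = - u 0 0.
Proof. by rewrite mxtrace_mx22 addrC => /eqP; rewrite addr_eq0 => /eqP. Qed.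

Lemma mxtrace_sqr_sl2 u : \tr u = 0 -> \tr (u *m u) = - 2 * \det u.
Proof.
by move=> tr_u; rewrite mxtrace_mx22 det_mx22 !mulmx_mx22E sl2_entry11 //; ring.
Qed.

Lemma det_scalar_add_sl2 c u : \tr u = 0 -> \det (c%:M + u) = c ^+ 2 + \det u.
Proof.
by move=> tr_u; rewrite !det_mx22 !mxE /= sl2_entry11 //; ring.
Qed.

Lemma mxtrace_mul_scalar_add_sl2 c (d : R) u w : \tr u = 0 -> \tr w = 0 ->
  \tr ((c%:M + u) *m (d%:M + w)) = 2 * c * d + \tr (u *m w).
Proof.
move=> tr_u tr_w; rewrite mulmxDl !mulmxDr -scalar_mxM mul_scalar_mx mul_mx_scalar.
by rewrite !mxtraceD !mxtraceZ tr_u tr_w mxtrace_scalar; ring.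
Qed.

Lemma mxtrace_mxcomm_sqr_sl2 u v : \tr u = 0 -> \tr v = 0 ->
  \tr (mxcomm u v *m mxcomm u v)
  = 2 * (\tr (u *m v) ^+ 2 - \tr (u *m u) * \tr (v *m v)).
Proof.
move=> tr_u tr_v; rewrite /mxcomm !mxtrace_mx22 !(mulmx_mx22E, mxE).
by rewrite !sl2_entry11 //; ring.
Qed.

(* The right-hand side is -2 times the Gram determinant of u, v, w for the
   trace form. *)
Lemma mxtrace_mul_mxcomm_sqr_sl2 u v w : \tr u = 0 -> \tr v = 0 -> \tr w = 0 ->
  \tr (w *m mxcomm u v) ^+ 2
  = 2 * (\tr (w *m w) * (\tr (u *m v) ^+ 2 - \tr (u *m u) * \tr (v *m v))
         + \tr (u *m u) * \tr (v *m w) ^+ 2 + \tr (v *m v) * \tr (u *m w) ^+ 2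
         - 2 * \tr (u *m v) * \tr (u *m w) * \tr (v *m w)).
Proof.
move=> tr_u tr_v tr_w; rewrite /mxcomm !mxtrace_mx22 !(mulmx_mx22E, mxE).
by rewrite !sl2_entry11 //; ring.
Qed.

End TwoByTwo.

Section TracelessDual.
Variables (F : numFieldType) (n : nat).

Lemma exists_traceless_mxtrace_mul_eq1 (A : 'M[F]_n.+1) :
  A != 0 -> \tr A = 0 -> exists2 E, \tr E = 0 & \tr (E *m A) = 1.
Proof.
move=> A_neq0 tr_A.
have [[i j] /= Aij | A0] := pickP [pred ij | A ij.1 ij.2 != 0]; last first.
  by case/eqP: A_neq0; apply/matrixP => i j; rewrite mxE; apply/eqP/negbFE/(A0 (i, j)).
pose E0 := (A i j)^-1 *: delta_mx j i.
have E0A : \tr (E0 *m A) = 1 by rewrite -scalemxAl mxtraceZ mxtrace_mul_delta mulVf.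
exists (E0 - (\tr E0 / n.+1%:R)%:M).
  by rewrite raddfB /= mxtrace_scalar -(mulr_natr (_ / _)) divfK ?subrr ?pnatr_eq0.
by rewrite mulmxBl raddfB /= mul_scalar_mx mxtraceZ tr_A mulr0 subr0.
Qed.

End TracelessDual.

Section ScalarShift.
Variable F : numFieldType.

Lemma mxtrace_scalar_half (t : F) : \tr ((t / 2)%:M : 'M[F]_2) = t.
Proof. by rewrite mxtrace_scalar -(mulr_natr (t / 2)) divfK ?pnatr_eq0. Qed.

Lemma scalar_add_traceless_decomp (t : F) (a : 'M[F]_2) :
  \tr a = t -> exists2 u, \tr u = 0 & a = (t / 2)%:M + u.
Proof.
move=> tr_a; exists (a - (t / 2)%:M); last by rewrite addrC subrK.
by rewrite raddfB /= mxtrace_scalar_half tr_a subrr.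
Qed.

Lemma det_scalar_add_sl2_eq1 (c : F) (u : 'M[F]_2) : \tr u = 0 ->
  \det (c%:M + u) = 1 <-> \tr (u *m u) = 2 * c ^+ 2 - 2.
Proof.
move=> tr_u; rewrite det_scalar_add_sl2 // mxtrace_sqr_sl2 //.
split => [/(canRL (addKr _)) -> | uu]; first ring.
apply: (@mulfI _ (-2)); first by rewrite oppr_eq0 pnatr_eq0.
by rewrite mulrDr uu; ring.
Qed.

End ScalarShift.

Section TracelessPair.
Variables (F : numFieldType) (u v : 'M[F]_2) (k : F).
Hypotheses (tr_u : \tr u = 0) (tr_v : \tr v = 0).
Hypotheses (uu : \tr (u *m u) = k) (vv : \tr (v *m v) = k).
Hypothesis uv_neq : mxcomm u v != 0.
Local Notation n := (mxcomm u v).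

Lemma exists_sl2_mxtrace_mul (p q : F) :
  exists2 w, \tr w = 0 & \tr (u *m w) = p /\ \tr (v *m w) = q.
Proof.
have [E _ En] := exists_traceless_mxtrace_mul_eq1 uv_neq (mxtrace_mxcomm u v).
(* tr (x [y, E]) = tr (E [x, y]), and [u, p v - q u] = p n, [v, p v - q u] = q n. *)
exists (mxcomm (p *: v - q *: u) E); first exact: mxtrace_mxcomm.
split; rewrite mxtrace_mul_mxcomm mxcommBr !mxcommZr mxcommxx ?(mxcommC u v).
  by rewrite scaler0 subr0 -scalemxAr mxtraceZ En mulr1.
by rewrite scaler0 sub0r scalerN opprK -scalemxAr mxtraceZ En mulr1.
Qed.

Lemma mxtrace_mul_sqr_isotropic : \tr (n *m n) = 0 -> \tr (u *m v) ^+ 2 = k ^+ 2.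
Proof.
rewrite mxtrace_mxcomm_sqr_sl2 // uu vv => /eqP.
by rewrite mulf_eq0 pnatr_eq0 /= subr_eq0 -expr2 => /eqP.
Qed.

(* If k = 0 then tr (u v) = 0 too, and the Gram identity would make n orthogonal
   to every traceless matrix. *)
Lemma mxtrace_sqr_neq0_isotropic : \tr (n *m n) = 0 -> k != 0.
Proof.
move=> /mxtrace_mul_sqr_isotropic uv2; apply/negP => /eqP k0.
move: uv2; rewrite k0 expr0n => /eqP; rewrite expf_eq0 => /eqP uv0.
have [E tr_E En] := exists_traceless_mxtrace_mul_eq1 uv_neq (mxtrace_mxcomm u v).
have := mxtrace_mul_mxcomm_sqr_sl2 tr_u tr_v tr_E.
rewrite En uu vv k0 uv0 expr1n => /eqP; apply/negP.
by rewrite [X in _ == X](_ : _ = 0) ?oner_eq0 //; ring.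
Qed.

(* Here tr (u v) = +-k, and the Gram identity reads tr (w n)^2 = 2 k (p -+ q)^2. *)
Lemma mxtrace_mul_mxcomm_neq0_isotropic w (p q : F) : p != q -> p != - q ->
  \tr (n *m n) = 0 -> \tr w = 0 -> \tr (u *m w) = p -> \tr (v *m w) = q ->
  \tr (w *m n) != 0.
Proof.
move=> p_neq_q p_neq_Nq nn0 tr_w uw vw; apply/negP => /eqP wn0.
have k_neq0 := mxtrace_sqr_neq0_isotropic nn0.
have := mxtrace_mul_mxcomm_sqr_sl2 tr_u tr_v tr_w.
rewrite uu vv uw vw wn0 -expr2 -(mxtrace_mul_sqr_isotropic nn0) subrr mulr0 add0r.
rewrite expr0n /= => /esym/eqP; rewrite mulf_eq0 pnatr_eq0 /=.
have /orP[/eqP uvk | /eqP uvk] : (\tr (u *m v) - k == 0) || (\tr (u *m v) + k == 0).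
  by rewrite -mulf_eq0 -subr_sqr (mxtrace_mul_sqr_isotropic nn0) subrr.
- rewrite (_ : _ - _ = k * (p - q) ^+ 2).
    by rewrite mulf_eq0 (negPf k_neq0) sqrf_eq0 subr_eq0 (negPf p_neq_q).
  by rewrite -[_ (u *m v)](subrK k) uvk; ring.
- rewrite (_ : _ - _ = k * (p + q) ^+ 2).
    by rewrite mulf_eq0 (negPf k_neq0) sqrf_eq0 addr_eq0 (negPf p_neq_Nq).
  by rewrite -[_ (u *m v)](addrK k) uvk; ring.
Qed.

End TracelessPair.

Section ClosedField.
Variable F : numClosedFieldType.

Lemma quadratic_has_root (a b c : F) :
  (a != 0) || (b != 0) -> exists s, a * s ^+ 2 + b * s + c = 0.
Proof.
have [-> /= b_neq0 | a_neq0 _] := eqVneq a 0.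
  by exists (- c / b); field.
pose r := sqrtC (b ^+ 2 - 4 * a * c).
exists ((- b + r) / (2 * a)).
have -> : a * ((- b + r) / (2 * a)) ^+ 2 + b * ((- b + r) / (2 * a)) + c
          = (r ^+ 2 - (b ^+ 2 - 4 * a * c)) / (4 * a) by field.
by rewrite sqrtCK subrr mul0r.
Qed.

Lemma exists_sl2_mxtrace_mul_sqr (u v : 'M[F]_2) (k p q : F) :
    \tr u = 0 -> \tr v = 0 -> \tr (u *m u) = k -> \tr (v *m v) = k ->
    mxcomm u v != 0 -> p != q -> p != - q ->
  exists w, [/\ \tr w = 0, \tr (u *m w) = p, \tr (v *m w) = q & \tr (w *m w) = k].
Proof.
move=> tr_u tr_v uu vv uv_neq p_neq_q p_neq_Nq; set n := mxcomm u v.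
have [w0 tr_w0 [uw0 vw0]] := exists_sl2_mxtrace_mul uv_neq p q.
have [s root_s] : exists s,
    \tr (n *m n) * s ^+ 2 + 2 * \tr (w0 *m n) * s + (\tr (w0 *m w0) - k) = 0.
  apply: quadratic_has_root; have [nn0 | //] := eqVneq (\tr (n *m n)) 0.
  rewrite mulf_neq0 ?pnatr_eq0 ?orbT //.
  exact: (mxtrace_mul_mxcomm_neq0_isotropic tr_u tr_v uu vv uv_neq p_neq_q).
exists (w0 + s *: n); split.
- by rewrite raddfD /= mxtraceZ mxtrace_mxcomm mulr0 addr0.
- by rewrite mulmxDr raddfD /= -scalemxAr mxtraceZ mxtrace_mul_mxcomml mulr0 addr0.
- by rewrite mulmxDr raddfD /= -scalemxAr mxtraceZ mxtrace_mul_mxcommr mulr0 addr0.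
- by apply/eqP; rewrite -subr_eq0 -root_s mxtrace_sqr_addZ; apply/eqP; ring.
Qed.

End ClosedField.

Theorem mainTheorem2 (t : CC) (a1 a2 : 'M[CC]_2) :
  in_Gt t a1 -> in_Gt t a2 -> a1 *m a2 <> a2 *m a1 ->
  forall t13 t23 : CC, t13 <> t23 -> t13 <> t ^+ 2 - t23 ->
  exists a3 : 'M[CC]_2, in_Gt t a3 /\
    \tr (a1 *m a3) = t13 /\ \tr (a2 *m a3) = t23.
Proof.
move=> [det_a1 tr_a1] [det_a2 tr_a2] a12_neq t13 t23 t13_neq t13_neqN.
have [u1 tr_u1 a1E] := scalar_add_traceless_decomp tr_a1.
have [u2 tr_u2 a2E] := scalar_add_traceless_decomp tr_a2.
subst a1 a2.
have uu1 := (det_scalar_add_sl2_eq1 _ tr_u1).1 det_a1.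
have uu2 := (det_scalar_add_sl2_eq1 _ tr_u2).1 det_a2.
have u12_neq : mxcomm u1 u2 != 0.
  by rewrite -(mxcomm_scalar_add (t / 2) (t / 2)) subr_eq0; apply/eqP.
have [|| w [tr_w u1w u2w ww]] :=
  exists_sl2_mxtrace_mul_sqr tr_u1 tr_u2 uu1 uu2 u12_neq
    (p := t13 - t ^+ 2 / 2) (q := t23 - t ^+ 2 / 2).
- by rewrite (can_eq (subrK _)); apply/eqP.
- apply/eqP => pq; apply: t13_neqN.
  by rewrite -(subrK (t ^+ 2 / 2) t13) pq; field.
exists ((t / 2)%:M + w); split; [split | split].
- exact/det_scalar_add_sl2_eq1.
- by rewrite raddfD /= mxtrace_scalar_half tr_w addr0.
- by rewrite mxtrace_mul_scalar_add_sl2 // u1w; field.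
- by rewrite mxtrace_mul_scalar_add_sl2 // u2w; field.
Qed.
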